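(* Let $m,n,k$ be positive integers. Let $X_1,X_2,\ldots,X_k$ be pairwise disjoint subsets of $[m]$ and let $Y_1,Y_2,\ldots,Y_k$ be subsets of $[n]$. Label all functions $f:[m]\to[n]$ arbitrarily as $f_1,f_2,\ldots,f_{n^m}$, and form the $k\times n^m$ matrix $B=(b_{ij})$ with $b_{ij}=1$ if $f_j(X_i)=Y_i$ and $b_{ij}=0$ otherwise. Then the number $N$ of columns of $B$ all of whose entries are $0$ is $$N=\sum_{I\subseteq [k]}(-1)^{|I|}B(I),\qquad\text{where}\qquad B(I)=n^{|[m]\setminus \bigcup_{i\in I}X_i|}\cdot \prod_{i\in I}|Y_i|!\,S(|X_i|,|Y_i|),$$ and the sum runs over all subsets $I$ of $[k]$.
   Context: $[n]=\{1,\ldots,n\}$; $|X|$ is the cardinality of $X$; $S(a,b)$ denotes the Stirling number of the second kind. *)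

From mathcomp Require Import all_boot all_order all_algebra.
Set Implicit Arguments. Unset Strict Implicit. Unset Printing Implicit Defensive.

Fixpoint stirling2 (a b : nat) : nat :=
  match a, b with
  | 0, 0 => 1
  | 0, _.+1 => 0
  | _.+1, 0 => 0
  | a'.+1, b'.+1 => b'.+1 * stirling2 a' b'.+1 + stirling2 a' b'
  end.

Definition Bmat (m n k : nat) (X : 'I_k -> {set 'I_m}) (Y : 'I_k -> {set 'I_n})
  (lab : 'I_(n ^ m) -> {ffun 'I_m -> 'I_n}) : 'M[nat]_(k, n ^ m) :=
  \matrix_(i < k, j < n ^ m) (if lab j @: X i == Y i then 1%N else 0%N).

Definition BI (m n k : nat) (X : 'I_k -> {set 'I_m}) (Y : 'I_k -> {set 'I_n})
  (I : {set 'I_k}) : nat :=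
  n ^ #|~: \bigcup_(i in I) X i| * \prod_(i in I) (#|Y i|`! * stirling2 #|X i| #|Y i|).

From mathcomp Require Import all_boot all_order all_algebra ring.
Import GRing.Theory.
Set Implicit Arguments. Unset Strict Implicit. Unset Printing Implicit Defensive.

(* A column of B is zero exactly when its function f satisfies f(X_i) <> Y_i
   for every i, so inclusion-exclusion reduces N to counting, for each I, the
   functions with f(X_i) = Y_i for all i in I.  As the X_i are disjoint, such
   an f splits into independent pieces: an arbitrary map on the complement of
   the union of the X_i (n^... choices) and, for each i in I, a surjection of
   X_i onto Y_i; removing one point of X_i shows that surjections obey the
   recurrence of |Y_i|! S(|X_i|,|Y_i|). *)

Section Restriction.
Variables (T R : finType) (r0 : R).
Implicit Types (A D : {set T}) (f g h : {ffun T -> R}) (P Q : pred {ffun T -> R}).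

Definition restrict D f : {ffun T -> R} := [ffun x => if x \in D then f x else r0].

Lemma card_support_sub A :
  #|[set f : {ffun T -> R} | r0.-support f \subset A]| = #|R| ^ #|A|.
Proof.
rewrite -(card_pffun_on r0 A R); apply: eq_card => f; rewrite inE.
by apply/idP/pffun_onP => [|[]].
Qed.

Lemma support_restrict A D f :
  r0.-support f \subset A -> r0.-support (restrict D f) \subset A :&: D.
Proof.
move=> /supportP fA; apply/supportP => x; rewrite inE ffunE negb_and.
by case: (x \in D); rewrite ?orbF //; apply: fA.
Qed.

Lemma restrict_id D f : r0.-support f \subset D -> restrict D f = f.
Proof.
by move=> /supportP fD; apply/ffunP => x; rewrite ffunE; case: ifPn => // /fD.
Qed.

Lemma card_support_split A D P Q :
  (forall f, P f = P (restrict D f)) -> (forall f, Q f = Q (restrict (~: D) f)) ->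
  #|[set f : {ffun T -> R} | r0.-support f \subset A & P f && Q f]| =
  #|[set g : {ffun T -> R} | r0.-support g \subset A :&: D & P g]| *
  #|[set h : {ffun T -> R} | r0.-support h \subset A :\: D & Q h]|.
Proof.
move=> PD QD; rewrite setDE -cardsX.
have restrict_inj : injective (fun f => (restrict D f, restrict (~: D) f)).
  move=> f f' [/ffunP fD /ffunP fD']; apply/ffunP => x.
  by have := fD x; have := fD' x; rewrite !ffunE inE; case: (x \in D).
rewrite -(card_imset _ restrict_inj); apply: eq_card => -[g h].
rewrite !inE /=; apply/imsetP/andP => [[f] | [/andP[gD Pg] /andP[hD Qh]]].
  rewrite inE => /andP[fA /andP[Pf Qf]] [-> ->].
  by rewrite -PD -QD Pf Qf !(support_restrict _ fA).
pose f := [ffun x => if x \in D then g x else h x].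
have fg : restrict D f = g.
  rewrite -[RHS](restrict_id (subset_trans gD (subsetIr _ _))).
  by apply/ffunP => x; rewrite !ffunE; case: (x \in D).
have fh : restrict (~: D) f = h.
  rewrite -[RHS](restrict_id (subset_trans hD (subsetIr _ _))).
  by apply/ffunP => x; rewrite !ffunE inE; case: (x \in D).
exists f; last by rewrite fg fh.
rewrite inE (PD f) (QD f) fg fh Pg Qh !andbT; apply/supportP => x xA.
move: gD hD => /supportP gD /supportP hD; rewrite ffunE.
case: (boolP (x \in D)) => xD; [apply: gD | apply: hD]; by rewrite inE negb_and xA ?xD.
Qed.

End Restriction.

Arguments card_support_split {T R r0} A D {P Q}.

Section Onto.
Variables (T R : finType) (r0 : R).
Implicit Types (A : {set T}) (B : {set R}).

(* Maps from A are encoded as functions on T that are r0 outside A. *)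
Definition onto_count A B :=
  #|[set g : {ffun T -> R} | r0.-support g \subset A & g @: A == B]|.

Lemma onto_count0 B : onto_count set0 B = (B == set0).
Proof.
rewrite /onto_count.
transitivity #|[set g : {ffun T -> R} | r0.-support g \subset set0 & B == set0]|.
  by apply: eq_card => g; rewrite !inE imset0 eq_sym.
case: (B == set0); last by rewrite eq_card0 // => g; rewrite !inE andbF.
transitivity #|[set g : {ffun T -> R} | r0.-support g \subset set0]|.
  by apply: eq_card => g; rewrite !inE andbT.
by rewrite card_support_sub cards0.
Qed.

Lemma card_support_set1 (x : T) (y : R) :
  #|[set g : {ffun T -> R} | r0.-support g \subset [set x] & g x == y]| = 1.
Proof.
rewrite -(cards1 [ffun z => if z == x then y else r0]); apply: eq_card => g.
rewrite !inE; apply/andP/eqP => [[/supportP gx /eqP <-] | ->].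
  by apply/ffunP => z; rewrite ffunE; case: eqP => [-> // | /eqP zx]; rewrite gx ?inE.
split; last by rewrite ffunE eqxx.
by apply/supportP => z; rewrite inE ffunE => /negbTE ->.
Qed.

Lemma setU1_eqE (y : R) S B :
  (y |: S == B) = (y \in B) && ((S == B) || (S == B :\ y)).
Proof.
apply/eqP/andP => [<- | [yB /orP[/eqP SB | /eqP ->]]]; last exact: setD1K.
  rewrite setU11; split=> //; case: (boolP (y \in S)) => yS.
    by rewrite (setUidPr (_ : [set y] \subset S)) ?eqxx // sub1set.
  by rewrite setU1K ?eqxx ?orbT.
by rewrite SB; apply/setUidPr; rewrite sub1set.
Qed.

Lemma card_onto_fiber A x y B : x \notin A ->
  #|[set g : {ffun T -> R} | r0.-support g \subset x |: A &
                             (g x == y) && (g @: (x |: A) == B)]| =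
  (y \in B) * (onto_count A B + onto_count A (B :\ y)).
Proof.
move=> xA.
have imset_restrict f : restrict r0 (~: [set x]) f @: A = f @: A.
  apply: eq_in_imset => z zA; rewrite ffunE !inE.
  by case: eqP => // zx; rewrite -zx zA in xA.
transitivity #|[set g : {ffun T -> R} | r0.-support g \subset x |: A &
                                        (g x == y) && (y |: g @: A == B)]|.
  by apply: eq_card => g; rewrite !inE imsetU1; case: eqP => [-> | _]; rewrite ?andbF.
rewrite (card_support_split (x |: A) [set x]); first last.
- by move=> f; rewrite imset_restrict.
- by move=> f; rewrite ffunE set11.
rewrite (setIidPr _) ?sub1set ?setU11 // card_support_set1 mul1n setU1K //.
under eq_finset do rewrite setU1_eqE.
case: (boolP (y \in B)) => yB; last by rewrite eq_card0 // => h; rewrite !inE andbF.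
rewrite mul1n /onto_count -(cardsID [set h : {ffun T -> R} | h @: A == B]).
have BDy : (B == B :\ y) = false by apply/negbTE/eqP => /setP/(_ y); rewrite setD11 yB.
congr (_ + _); apply: eq_card => h; rewrite !inE.
  by case: (_ == B); rewrite ?orbT ?andbT ?andbF.
by case: eqP => [-> | _]; rewrite ?BDy ?andbF.
Qed.

Lemma onto_count_setU1 A x B : x \notin A ->
  onto_count (x |: A) B = \sum_(y in B) (onto_count A B + onto_count A (B :\ y)).
Proof.
move=> xA; rewrite [in LHS]/onto_count -sum1_card.
rewrite (partition_big (fun g : {ffun T -> R} => g x) predT) //= [RHS]big_mkcond.
apply: eq_bigr => y _; rewrite sum1dep_card.
transitivity ((y \in B) * (onto_count A B + onto_count A (B :\ y))).
  rewrite -(@card_onto_fiber A x y B xA); apply: eq_card => g.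
  by rewrite !inE -andbA [(_ == B) && _]andbC.
by case: (y \in B); rewrite ?mul1n ?mul0n.
Qed.

Lemma onto_countE A B : onto_count A B = #|B|`! * stirling2 #|A| #|B|.
Proof.
have [a] := ubnP #|A|; elim: a A B => // a IH A B ltAa.
have [-> | [x xA]] := set_0Vmem A.
  rewrite onto_count0 cards0; case: (B =P set0) => [-> | /eqP].
    by rewrite cards0.
  by rewrite -cards_eq0; case: #|B| => // c; rewrite muln0.
have ltA'a : #|A :\ x| < a by move: ltAa; rewrite (cardsD1 x A) xA add1n ltnS.
rewrite -(setD1K xA) onto_count_setU1 ?setD11 // cardsU1 setD11 add1n.
have cardD1 y : y \in B -> #|B :\ y| = #|B|.-1 by rewrite (cardsD1 y B) => ->.
under eq_bigr => y yB do rewrite !IH // cardD1 //.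
rewrite sum_nat_const; case: #|B| => [|c]; first by rewrite mul0n muln0.
by rewrite /= factS; ring.
Qed.

End Onto.

Lemma forall_in_setD1 (I : finType) (J : {set I}) i (p : pred I) : i \in J ->
  [forall l in J, p l] = p i && [forall l in J :\ i, p l].
Proof.
move=> iJ; apply/forall_inP/andP => [pJ | [pi /forall_inP pJ] l lJ].
  by split; [apply: pJ | apply/forall_inP => l /setD1P[_ /pJ]].
by case: (l =P i) => [-> // | /eqP li]; apply: pJ; rewrite !inE li.
Qed.

Section Images.
Variables (T R I : finType) (r0 : R) (X : I -> {set T}) (Y : I -> {set R}).
Hypothesis disjX : forall i j, i != j -> [disjoint X i & X j].

Lemma card_images_support (J : {set I}) :
  #|[set f : {ffun T -> R} | r0.-support f \subset \bigcup_(i in J) X i &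
                             [forall i in J, f @: X i == Y i]]| =
  \prod_(i in J) onto_count r0 (X i) (Y i).
Proof.
have [a] := ubnP #|J|; elim: a J => // a IH J ltJa.
have [-> | [i iJ]] := set_0Vmem J.
  rewrite big_set0 big_set0 -(expn0 #|R|) -(cards0 T) -(card_support_sub r0).
  apply: eq_card => f; rewrite !inE; case: (_ \subset _) => //=.
  by apply/forall_inP => i; rewrite inE.
have ltJ'a : #|J :\ i| < a by move: ltJa; rewrite (cardsD1 i J) iJ add1n ltnS.
have disjXU : [disjoint X i & \bigcup_(l in J :\ i) X l].
  by apply: bigcup_disjoint => l /setD1P[li _]; apply: disjX; rewrite eq_sym.
rewrite [RHS](big_setD1 i iJ) /= -IH //.
under eq_finset do rewrite (forall_in_setD1 _ iJ) (big_setD1 i iJ) /=.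
rewrite (card_support_split _ (X i)); first last.
- move=> f; apply: eq_forallb_in => l /setD1P[li _]; congr (_ == _).
  apply: eq_in_imset => z zl; rewrite ffunE inE.
  by rewrite (disjointFr (disjX li) zl).
- by move=> f; congr (_ == _); apply: eq_in_imset => z zi; rewrite ffunE zi.
by rewrite setUK setDUl setDv set0U (setDidPl _) // disjoint_sym.
Qed.

Lemma card_images_eq (J : {set I}) :
  #|[set f : {ffun T -> R} | [forall i in J, f @: X i == Y i]]| =
  #|R| ^ #|~: \bigcup_(i in J) X i| * \prod_(i in J) onto_count r0 (X i) (Y i).
Proof.
rewrite -card_images_support mulnC -(card_support_sub r0).
transitivity #|[set f : {ffun T -> R} | r0.-support f \subset setT &
                                        [forall i in J, f @: X i == Y i] && true]|.
  by apply: eq_card => f; rewrite !inE andbT andb_idl.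
rewrite (card_support_split setT (\bigcup_(i in J) X i)) ?setTI ?setTD //.
- by congr (_ * _); apply: eq_card => h; rewrite !inE andbT.
move=> f; apply: eq_forallb_in => i iJ; congr (_ == _).
apply: eq_in_imset => z zi; rewrite ffunE.
by rewrite (subsetP (bigcup_sup i iJ)).
Qed.

End Images.

Local Open Scope ring_scope.

Lemma prod_natr_bool (R : pzSemiRingType) (I : finType) (P : pred I) (b : I -> bool) :
  \prod_(i | P i) (b i)%:R = [forall (i | P i), b i]%:R :> R.
Proof.
rewrite -big_andE (big_morph (fun c : bool => c%:R : R) (id1 := 1) (op1 := *%R)) //.
by move=> c d; rewrite -natrM mulnb.
Qed.

Lemma inclusion_exclusion (I T : finType) (A : I -> pred T) :
  #|[set x | [forall i, ~~ A i x]]|%:Z =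
  \sum_(J : {set I}) (-1) ^+ #|J| * #|[set x | [forall i in J, A i x]]|%:Z.
Proof.
have cardE (P : pred T) : #|[set x | P x]|%:Z = \sum_x (P x)%:R.
  rewrite -sum1dep_card -natz natr_sum [LHS]big_mkcond /=.
  by apply: eq_bigr => x _; case: (P x).
rewrite cardE.
transitivity (\sum_x \prod_i ((~~ A i x)%:R : int)).
  by apply: eq_bigr => x _; rewrite prod_natr_bool.
transitivity (\sum_x \prod_i (- (A i x)%:R + 1) : int).
  apply: eq_bigr => x _; apply: eq_bigr => i _.
  by case: (A i x); rewrite ?subrr ?oppr0 ?add0r.
under eq_bigr => x _ do rewrite bigA_distr.
rewrite exchange_big /=; apply: eq_bigr => J _.
rewrite cardE mulr_sumr; apply: eq_bigr => x _.
by rewrite -big_mkcond /= prodrN prod_natr_bool.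
Qed.

Lemma card_Bmat_zero_columns (m n k : nat) (X : 'I_k -> {set 'I_m})
    (Y : 'I_k -> {set 'I_n}) (lab : 'I_(n ^ m) -> {ffun 'I_m -> 'I_n}) :
  bijective lab ->
  #|[set j | [forall i, Bmat X Y lab i j == 0%N]]| =
  #|[set f : {ffun 'I_m -> 'I_n} | [forall i, f @: X i != Y i]]|.
Proof.
move=> lab_bij; rewrite -(on_card_preimset (onW_bij _ lab_bij)).
apply: eq_card => j.
by rewrite !inE; apply: eq_forallb => i; rewrite /Bmat mxE; case: (_ @: _ == _).
Qed.

Theorem theorem2 (m n k : nat) (hm : (0 < m)%N) (hn : (0 < n)%N) (hk : (0 < k)%N)
  (X : 'I_k -> {set 'I_m}) (Y : 'I_k -> {set 'I_n})
  (hdisj : forall i j : 'I_k, i != j -> [disjoint X i & X j])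
  (lab : 'I_(n ^ m) -> {ffun 'I_m -> 'I_n}) (hlab : bijective lab) :
  (#|[set j : 'I_(n ^ m) | [forall i : 'I_k, Bmat X Y lab i j == 0%N]]|%:Z =
   \sum_(I : {set 'I_k}) (-1) ^+ #|I| * (BI X Y I)%:Z)%R.
Proof.
rewrite card_Bmat_zero_columns //.
rewrite (inclusion_exclusion (fun i (f : {ffun _ -> _}) => f @: X i == Y i)).
apply: eq_bigr => J _; congr (_ * _%:Z).
rewrite (card_images_eq (Ordinal hn) Y hdisj) card_ord /BI; congr (_ * _)%N.
by apply: eq_bigr => i _; rewrite onto_countE.
Qed.
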